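(* Let $h(x)=\mathrm{ReLU}(\Gamma^*W^*x+\beta^* )$ be any one-layer ReLU network with $x\in\mathbb{R}^d$, $W^*\in\mathbb{R}^{d\times d}$, $\Gamma^*\in\mathbb{R}^{d\times d}$ diagonal, and $\beta^*\in\mathbb{R}^d$. Consider the two-layer network with batch normalization $$f(x)=\mathrm{ReLU}\Big(\Gamma'\,\frac{V\,\mathrm{ReLU}\big(\Gamma\frac{Wx-\mu}{s}+\beta\big)-\mu'}{s'}+\beta'\Big).$$ Its parameters are: - frozen: $W\in\mathbb{R}^{d^2\times d}$ and $V\in\mathbb{R}^{d\times d^2}$ random; $\mu\in\mathbb{R}^{d^2}$, $\mu'\in\mathbb{R}^d$ and nonzero scalars $s,s'$ fixed; - tunable: diagonal $\Gamma\in\mathbb{R}^{d^2\times d^2}$, $\Gamma'\in\mathbb{R}^{d\times d}$, and vectors $\beta\in\mathbb{R}^{d^2}$, $\beta'\in\mathbb{R}^d$. Then, with probability $1$ over the draw of $W$ and $V$, there exist $\Gamma,\beta,\Gamma',\beta'$ such that $f(x)=h(x)$ for all $x\in\mathbb{R}^d$ with $\|x\|_2\le1$.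
   Context: $\mathrm{ReLU}(t)=\max(t,0)$ is applied entrywise. ''Random'' matrices have independent, identically distributed entries drawn from an arbitrary continuous and bounded distribution, independently across matrices. In $\frac{Wx-\mu}{s}$ the subtraction is of vectors and the division is by the scalar $s$ (batch statistics are treated as fixed constants). *)

From HB Require Import structures.
From mathcomp Require Import all_boot all_order all_algebra.
From mathcomp Require Import all_classical all_reals all_analysis.
Set Implicit Arguments. Unset Strict Implicit. Unset Printing Implicit Defensive.
Import Order.TTheory GRing.Theory Num.Theory.
Local Open Scope classical_set_scope.
Local Open Scope ring_scope.

Definition relu {R : realType} (t : R) : R := Num.max t 0.
Definition relu_mx {R : realType} m n (A : 'M[R]_(m, n)) : 'M[R]_(m, n) :=
  map_mx relu A.

Definition in_unit_ball {R : realType} d (x : 'cV[R]_d) : Prop :=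
  \sum_(i < d) x i 0 ^+ 2 <= 1.

Definition relu_layer {R : realType} d (gs : 'rV[R]_d) (Ws : 'M[R]_d)
  (bs : 'cV[R]_d) (x : 'cV[R]_d) : 'cV[R]_d :=
  relu_mx (diag_mx gs *m Ws *m x + bs).

Definition bn_net {R : realType} d
  (W : 'M[R]_(d ^ 2, d)) (V : 'M[R]_(d, d ^ 2))
  (mu : 'cV[R]_(d ^ 2)) (mu' : 'cV[R]_d) (s s' : R)
  (g : 'rV[R]_(d ^ 2)) (b : 'cV[R]_(d ^ 2)) (g' : 'rV[R]_d) (b' : 'cV[R]_d)
  (x : 'cV[R]_d) : 'cV[R]_d :=
  relu_mx (diag_mx g' *m (s'^-1 *: (V *m relu_mx (diag_mx g *m (s^-1 *: (W *m x - mu)) + b) - mu')) + b').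

Definition entry_idx (d : nat) : finType :=
  (('I_(d ^ 2) * 'I_d) + ('I_d * 'I_(d ^ 2)))%type.

Definition entry_of {R : realType} {T : Type} d
  (W : T -> 'M[R]_(d ^ 2, d)) (V : T -> 'M[R]_(d, d ^ 2))
  (j : entry_idx d) : T -> R :=
  match j with
  | inl (i, k) => fun w => W w i k
  | inr (i, k) => fun w => V w i k
  end.

Definition mutually_independent {R : realType} {dT : measure_display}
  {T : measurableType dT} (P : probability T R) (I : finType) (X : I -> T -> R) : Prop :=
  forall (J : {set I}) (B : I -> set R), (forall j, measurable (B j)) ->
    P (\bigcap_(j in [set j | j \in J]) (X j @^-1` B j)) =
    (\prod_(j in J) P (X j @^-1` B j))%E.

(* mu is a continuous (atomless) and bounded (bounded support) law on R *)
Definition continuous_bounded_law {R : realType} (mu : probability R R) : Prop :=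
  (forall t : R, mu [set t] = 0%E) /\
  (exists M : R, mu `[(- M), M]%classic = 1%E).

From HB Require Import structures.
From mathcomp Require Import all_boot all_order all_algebra.
From mathcomp Require Import all_classical all_reals all_analysis.
From mathcomp Require Import measurable_realfun ring.
Import Order.TTheory GRing.Theory Num.Theory.
Local Open Scope classical_set_scope.
Local Open Scope ring_scope.

(* Write gam for the diagonal of the first-layer scale.  Choosing the biases
   large enough keeps the first ReLU in its linear regime on the unit ball, so
   f = h there as soon as  V diag(gam) W = diag(gs) Ws.  This is the linear
   system  vec(V diag(gam) W) = gam * B(W, V)  in the d^2 unknowns gam, where
   row j of the square matrix B(W, V) = [coef_mx W V] is vec(V_{:,j} W_{j,:}).
   So it suffices that det B(W, V) <> 0 almost surely. *)

Section multiaffine.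
Context {R : comPzRingType} {I : finType}.
Implicit Types (F G : (I -> R) -> R) (x : I -> R) (S : {set I}).

Definition upd x (e : I) (t : R) : I -> R := fun k => if k == e then t else x k.

Definition multiaffine F :=
  forall e x, F x = F (upd x e 0) + x e * (F (upd x e 1) - F (upd x e 0)).

Definition depends_on F S := forall x y, (forall k, k \in S -> x k = y k) -> F x = F y.

Lemma upd_eq x e t : upd x e t e = t.
Proof. by rewrite /upd eqxx. Qed.

Lemma upd_neq x e t k : k != e -> upd x e t k = x k.
Proof. by rewrite /upd => /negbTE ->. Qed.

Lemma upd_upd x e t u : upd (upd x e t) e u = upd x e u.
Proof. by apply/funext => k; rewrite /upd; case: eqP. Qed.

Lemma upd_comm x e e' t u : e != e' -> upd (upd x e t) e' u = upd (upd x e' u) e t.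
Proof.
move=> ee'; apply/funext => k; rewrite /upd.
by case: (k =P e') => [->|//]; rewrite eq_sym (negbTE ee').
Qed.

Lemma multiaffine_upd {F} j c : multiaffine F -> multiaffine (fun x => F (upd x j c)).
Proof.
move=> hF e x /=; have [->|ej] := eqVneq e j; first by rewrite !upd_upd subrr mulr0 addr0.
have je : j != e by rewrite eq_sym.
by rewrite (hF e (upd x j c)) !(upd_comm x _ _ _ _ je) upd_neq.
Qed.

Lemma multiaffine_sub {F G} : multiaffine F -> multiaffine G -> multiaffine (fun x => F x - G x).
Proof. by move=> hF hG e x /=; rewrite (hF e x) (hG e x); ring. Qed.

Lemma multiaffine_mul a b : a != b -> multiaffine (fun x => x a * x b).
Proof.
move=> ab e x /=; have ba : b != a by rewrite eq_sym.
have [->|ea] := eqVneq e a.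
  by rewrite !upd_eq !(upd_neq _ _ _ _ ba) mul0r mul1r subr0 add0r.
have [->|eb] := eqVneq e b.
  by rewrite !upd_eq !(upd_neq _ _ _ _ ab) mulr0 mulr1 subr0 add0r mulrC.
have [ae be] : a != e /\ b != e by rewrite ![_ == e]eq_sym.
by rewrite !(upd_neq _ _ _ _ ae) !(upd_neq _ _ _ _ be) subrr mulr0 addr0.
Qed.

Lemma depends_on_setT F : depends_on F [set: I]%SET.
Proof. by move=> x y h; congr F; apply/funext => k; apply: h; rewrite finset.in_setT. Qed.

Lemma depends_on_upd {F S} j c : depends_on F S -> depends_on (fun x => F (upd x j c)) (S :\ j).
Proof.
move=> hF x y hxy; apply: hF => k kS; rewrite /upd.
by case: eqP => // /eqP kj; apply: hxy; rewrite in_setD1 kj.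
Qed.

Lemma depends_on_sub {F G S} : depends_on F S -> depends_on G S ->
  depends_on (fun x => F x - G x) S.
Proof. by move=> hF hG x y h; rewrite (hF x y h) (hG x y h). Qed.

Lemma depends_on_set0 {F} : depends_on F finset.set0 -> forall x, F x = F (fun=> 0).
Proof. by move=> hF x; apply: hF => k; rewrite finset.in_set0. Qed.

Lemma card_pick {S n} : #|S| = n.+1 -> exists2 j, j \in S & #|S :\ j| = n.
Proof.
move=> cS; have [j jS] : exists j, j \in S by apply/set0Pn; rewrite -card_gt0 cS.
by exists j => //; move: cS; rewrite (cardsD1 j S) jS => -[].
Qed.

End multiaffine.

Definition affine_roots {R : realType} : set ((R * R) * R) :=
  [set p | p.1.1 != 0 /\ p.2 * p.1.1 + p.1.2 = 0].

Lemma affine_roots_measurable {R : realType} : measurable (@affine_roots R).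
Proof.
have m11 : measurable_fun setT (fun p : (R * R) * R => p.1.1).
  exact: measurableT_comp measurable_fst measurable_fst.
have -> : affine_roots = ((fun p : (R * R) * R => p.1.1) @^-1` (~` [set 0])) `&`
    ((fun p : (R * R) * R => p.2 * p.1.1 + p.1.2) @^-1` [set 0]).
  by apply/seteqP; split => -[[u v] t] [h1 h2]; split => //; apply/eqP.
apply: measurableI; rewrite -[X in measurable X]setTI.
  by apply: m11 => //; exact: measurableC (measurable_set1 _).
exact: (measurable_funD (measurable_funM measurable_snd m11)
  (measurableT_comp measurable_snd measurable_fst)).
Qed.

Lemma affine_roots_section {R : realType} (u : R * R) :
  xsection affine_roots u `<=` [set - u.2 / u.1].
Proof.
case: u => a b t; rewrite /xsection /affine_roots /= inE /= => -[a_nz root].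
by apply: (mulIf a_nz); rewrite divfK //; apply/eqP; rewrite -addr_eq0 root.
Qed.

Section vanishing.
Local Open Scope ereal_scope.
Context {R : realType} {dT : measure_display} {T : measurableType dT}
  {P : probability T R} {law : probability R R} {I : finType} {X : I -> T -> R}.
Hypotheses (hmeas : forall j, measurable_fun setT (X j))
  (hdist : forall j (B : set R), measurable B -> P (X j @^-1` B) = law B)
  (hatom : forall t : R, law [set t] = 0)
  (hind : mutually_independent P X).
Implicit Types (S : {set I}).

Definition values (w : T) : I -> R := fun k => X k w.

(* The pi-system of events  /\_{k in S} {X_k in B_k}; it generates sigma(X_k, k in S). *)
Definition cylinders (S : {set I}) : set (set T) :=
  [set E | exists B : I -> set R, (forall k, measurable (B k)) /\
     E = \bigcap_(k in [set k | k \in S]) (X k @^-1` B k)].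

Definition Tsub (S : {set I}) := g_sigma_algebraType (cylinders S).

Lemma preimage_measurable j (B : set R) : measurable B -> measurable (X j @^-1` B).
Proof. by move=> mB; rewrite -[X in measurable X]setTI; exact: hmeas. Qed.

Lemma cylinders_measurable S : cylinders S `<=` measurable.
Proof.
move=> _ [B [mB ->]]; apply: fin_bigcap_measurable; first exact: finite_finset.
by move=> k _; exact: preimage_measurable.
Qed.

Lemma cylinders_setI S : setI_closed (cylinders S).
Proof.
move=> _ _ [B1 [mB1 ->]] [B2 [mB2 ->]].
exists (fun k => B1 k `&` B2 k); split; first by move=> k; exact: measurableI.
apply/seteqP; split => w /=; first by move=> [h1 h2] k Sk; split; [exact: h1|exact: h2].
by move=> h; split => k Sk; have [] := h k Sk.
Qed.

Lemma cylinders_setT S : cylinders S setT.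
Proof. by exists (fun=> setT); split => //; apply/seteqP; split => w //= _ k _. Qed.

Lemma cylinders_subset {S1 S2} : S1 \subset S2 -> cylinders S1 `<=` cylinders S2.
Proof.
move=> s12 _ [B [mB ->]].
exists (fun k => if k \in S1 then B k else setT); split; first by move=> k; case: ifP.
apply/seteqP; split => w /= h k kS; first by case: ifP => // kS1; exact: h.
by have := h k (fintype.subsetP s12 k kS); rewrite kS.
Qed.

Lemma measurable_fun_Tsub {d'} {T' : measurableType d'} {f : T -> T'} {S} :
  measurable_fun (setT : set (Tsub S)) f -> measurable_fun setT f.
Proof.
move=> mf _ C mC; rewrite setTI.
have := mf measurableT C mC; rewrite setTI.
exact: (smallest_sub (@sigma_algebra_measurable _ T) (@cylinders_measurable S)).
Qed.

Lemma measurable_fun_Tsub_mono {f : T -> R} {S1 S2} : S1 \subset S2 ->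
  measurable_fun (setT : set (Tsub S1)) f -> measurable_fun (setT : set (Tsub S2)) f.
Proof.
move=> s12 mf _ C mC; have := mf measurableT C mC; apply: smallest_sub.
  exact: smallest_sigma_algebra.
by move=> E /(cylinders_subset s12) E2; exact: sub_sigma_algebra.
Qed.

Lemma X_measurable_Tsub S j : j \in S -> measurable_fun (setT : set (Tsub S)) (X j).
Proof.
move=> jS _ C mC; apply: sub_sigma_algebra.
exists (fun k => if k == j then C else setT); split; first by move=> k; case: ifP.
apply/seteqP; split => w /=; first by move=> [_ h] k kS; case: eqP => [->|].
by move=> h; split => //; have := h j jS; rewrite eqxx.
Qed.

Lemma indep_cylinders {S j} {C : set R} : j \notin S -> measurable C ->
  forall E, cylinders S E -> P (E `&` X j @^-1` C) = P E * law C.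
Proof.
move=> jS mC _ [B [mB ->]].
pose B' k := if k == j then C else B k.
have mB' k : measurable (B' k) by rewrite /B'; case: ifP.
have := hind (j |: S) B' mB'; rewrite big_setU1 //= /B' eqxx.
rewrite (eq_bigr (fun k => P (X k @^-1` B k))); last first.
  by move=> k kS; case: eqP => // kj; move: jS; rewrite -kj kS.
rewrite -(hind S B mB) hdist // muleC => <-; congr (P _).
apply/seteqP; split => w /=.
- move=> [h1 h2] k; rewrite /= in_setU1 => /orP[/eqP ->|kS]; first by rewrite eqxx.
  by case: eqP => [->//|_]; exact: h1.
- move=> h; split; last by have := h j; rewrite /= in_setU1 eqxx; apply.
  move=> k kS; have := h k; rewrite /= in_setU1 kS orbT => /(_ isT).
  by case: eqP => // kj; move: jS; rewrite -kj kS.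
Qed.

(* By uniqueness of measures agreeing on a pi-system, the same holds on all of
   sigma(X_k, k in S). *)
Lemma indep_sigma {S j} {C : set R} : j \notin S -> measurable C ->
  forall E, <<s cylinders S >> E -> P (E `&` X j @^-1` C) = P E * law C.
Proof.
move=> jS mC E sE.
have lC : law C = (fine (law C))%:E by rewrite fineK // fin_num_measure.
have lC0 : (0 <= fine (law C))%R by apply: fine_ge0.
pose m1 := mrestr P (preimage_measurable j C mC).
pose m2 := mscale (NngNum lC0) P.
have e1 A : m1 A = P (A `&` X j @^-1` C) by [].
have e2 A : m2 A = P A * law C by rewrite lC muleC.
have := @g_sigma_algebra_measure_unique _ R T (cylinders S)
  (@cylinders_measurable S) (fun=> setT) (fun=> cylinders_setT S) (bigcup_const _ _)
  m1 m2 (@cylinders_setI S).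
move=> /(_ (ex_intro _ 0%N Logic.I)) unique; rewrite -e1 -e2; apply: unique => //.
- move=> A SA.
  exact: etrans (e1 A) (etrans (indep_cylinders jS mC A SA) (esym (e2 A))).
- move=> _; apply: le_lt_trans (ltry _).
  exact: probability_le1 (measurableI _ _ measurableT (preimage_measurable j C mC)).
Qed.

(* Fubini for an independent pair: if g is sigma(X_k, k in S)-measurable and
   j is not in S, a set D all of whose sections have law-measure 0 is hit by
   (g, X_j) with probability 0. *)
Lemma independent_section_null {d'} {T' : measurableType d'} {S j}
    {g : T -> T'} {D : set (T' * R)} : j \notin S -> measurable_fun (setT : set (Tsub S)) g ->
  measurable D -> (forall u, law (xsection D u) = 0) ->
  P ((fun w => (g w, X j w)) @^-1` D) = 0.
Proof.
move=> jS mgS mD null_sections.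
have hg C : measurable C -> <<s cylinders S >> (g @^-1` C).
  by move=> mC; have := mgS measurableT C mC; rewrite setTI.
have mg := measurable_fun_Tsub mgS.
have mgX : measurable_fun setT (fun w => (g w, X j w)) by exact: measurable_fun_pair.
pose gm := MeasurableFun.Pack (MeasurableFun.Class (isMeasurableFun.Build _ _ _ _ _ mg)).
pose gXm := MeasurableFun.Pack (MeasurableFun.Class (isMeasurableFun.Build _ _ _ _ _ mgX)).
have joint_law : forall A B, measurable A -> measurable B ->
    distribution P gXm (A `*` B) = distribution P gm A * law B.
  by move=> A B mA mB; exact: (indep_sigma jS mB _ (hg A mA)).
rewrite -[LHS]/(distribution P gXm D) -(product_measure_unique joint_law mD).
rewrite /product_measure1 /= (eq_integral (cst 0)) ?integral0 // => u _.
exact: null_sections.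
Qed.

(* The inductive step: if X_j is independent of (a, b), then a <> 0 and
   X_j a + b = 0 happen together with probability 0, since X_j is atomless. *)
Lemma affine_root_null {S j} {a b : T -> R} : j \notin S ->
  measurable_fun (setT : set (Tsub S)) a -> measurable_fun (setT : set (Tsub S)) b ->
  P.-negligible [set w | a w != 0%R /\ (X j w * a w + b w = 0)%R].
Proof.
move=> jS ma mb.
have mab : measurable_fun (setT : set (Tsub S)) (fun w => (a w, b w)).
  exact: measurable_fun_pair.
have null_sections u : law (xsection affine_roots u) = 0.
  exact: subset_measure0 (measurable_xsection u affine_roots_measurable)
    (measurable_set1 _) (affine_roots_section u) (hatom _).
have -> : [set w | a w != 0%R /\ (X j w * a w + b w = 0)%R] =
    (fun w => ((a w, b w), X j w)) @^-1` affine_roots by [].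
apply/negligibleP; last first.
  exact: independent_section_null jS mab affine_roots_measurable null_sections.
rewrite -[X in measurable X]setTI.
exact: measurable_fun_pair (measurable_fun_Tsub mab) (hmeas j) measurableT _
  affine_roots_measurable.
Qed.

Lemma multiaffine_measurable {S} {F : (I -> R) -> R} : multiaffine F -> depends_on F S ->
  measurable_fun (setT : set (Tsub S)) (fun w => F (values w)).
Proof.
move Sn : #|S| => n; elim: n S F Sn => [|n IH] S F cS hF dF.
  have S0 : S = finset.set0 by apply/eqP; rewrite -cards_eq0 cS.
  rewrite S0 in dF; rewrite (_ : (fun w => _) = cst (F (fun=> 0%R))).
    exact: measurable_cst.
  by apply/funext => w; exact: depends_on_set0.
have [j jS cS'] := card_pick cS.
have sub : S :\ j \subset S by exact: subsetDl.
have m0 := measurable_fun_Tsub_mono sub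
  (IH _ _ cS' (multiaffine_upd j 0%R hF) (depends_on_upd j 0%R dF)).
have m1 := measurable_fun_Tsub_mono sub
  (IH _ _ cS' (multiaffine_upd j 1%R hF) (depends_on_upd j 1%R dF)).
rewrite (_ : (fun w => F (values w)) = ((fun w => F (upd (values w) j 0%R)) \+
   (X j \* ((fun w => F (upd (values w) j 1%R)) \- (fun w => F (upd (values w) j 0%R)))))%R).
  apply: measurable_funD => //; apply: measurable_funM; first exact: X_measurable_Tsub.
  exact: measurable_funB.
by apply/funext => w /=; rewrite {1}(hF j (values w)).
Qed.

(* A multiaffine function of the X_k that is not identically zero vanishes
   with probability 0: write F = F0 + x_j a with F0, a free of x_j; where
   a(X) <> 0 the zero set is an affine root in X_j, and a(X) = 0 is null by
   induction unless a is identically zero, in which case F = F0. *)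
Lemma multiaffine_zero_null {S} {F : (I -> R) -> R} : multiaffine F -> depends_on F S ->
  (exists x, F x != 0%R) -> P.-negligible [set w | F (values w) = 0%R].
Proof.
move Sn : #|S| => n; elim: n S F Sn => [|n IH] S F cS hF dF [x0 Fx0].
  have S0 : S = finset.set0 by apply/eqP; rewrite -cards_eq0 cS.
  rewrite S0 in dF; rewrite (_ : [set w | _] = set0); first exact: negligible_set0.
  apply/seteqP; split => w //= Fw; move: Fx0.
  by rewrite (depends_on_set0 dF x0) -(depends_on_set0 dF (values w)) Fw eqxx.
have [j jS cS'] := card_pick cS.
have jS' : j \notin S :\ j by rewrite in_setD1 eqxx.
pose F0 x := F (upd x j 0%R).
pose a x := (F (upd x j 1%R) - F0 x)%R.
have hF0 : multiaffine F0 := multiaffine_upd j 0%R hF.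
have dF0 : depends_on F0 (S :\ j) := depends_on_upd j 0%R dF.
have ha : multiaffine a := multiaffine_sub (multiaffine_upd j 1%R hF) hF0.
have da : depends_on a (S :\ j) := depends_on_sub (depends_on_upd j 1%R dF) dF0.
have F_decomp x : F x = (F0 x + x j * a x)%R := hF j x.
case: (pselect (exists x, a x != 0%R)) => [a_nz|a_z].
  apply: (negligibleS _ (negligibleU (IH _ a cS' ha da a_nz)
    (affine_root_null jS' (multiaffine_measurable ha da) (multiaffine_measurable hF0 dF0)))).
  move=> w /= Fw; have [a0|a0] := eqVneq (a (values w)) 0%R; [left|right] => //=.
  by split => //; move: Fw; rewrite F_decomp addrC.
have F_F0 x : F x = F0 x.
  rewrite F_decomp; have [->|a_x] := eqVneq (a x) 0%R; first by rewrite mulr0 addr0.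
  by case: a_z; exists x.
rewrite (_ : [set w | _] = [set w | F0 (values w) = 0%R]).
  by apply: (IH _ _ cS' hF0 dF0); exists x0; rewrite -F_F0.
by apply/seteqP; split => w /=; rewrite F_F0.
Qed.

End vanishing.
Arguments values {R dT T I} X w.

Section coefficient_matrix.
Context {R : comPzRingType} {m n p : nat}.

(* Row j of [coef_mx W V] is vec(V_{:,j} W_{j,:}); it represents the linear
   map gam |-> V diag(gam) W by a matrix. *)
Definition coef_mx (W : 'M[R]_(p, n)) (V : 'M[R]_(m, p)) : 'M[R]_(p, m * n) :=
  \matrix_(j < p) mxvec (col j V *m row j W).

Lemma coef_mxE W V j (i : 'I_m) (k : 'I_n) :
  coef_mx W V j (mxvec_index i k) = V i j * W j k.
Proof. by rewrite /coef_mx mxE mxvecE mxE big_ord1 !mxE. Qed.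

Lemma mxvec_diag_factor W V (gam : 'rV[R]_p) :
  mxvec (V *m diag_mx gam *m W) = gam *m coef_mx W V.
Proof.
apply/rowP => c; case/mxvec_indexP: c => i k.
rewrite mxvecE mul_mx_diag mulmx_sum_row summxE !mxE.
apply: eq_bigr => j _; rewrite !mxE mxvecE !mxE big_ord1 !mxE.
by rewrite mulrCA mulrA.
Qed.

End coefficient_matrix.

Lemma diag_factor_solvable {F : fieldType} {m n} {W : 'M[F]_(m * n, n)}
    {V : 'M[F]_(m, m * n)} :
  \det (coef_mx W V) != 0 -> forall M : 'M[F]_(m, n),
  exists gam : 'rV[F]_(m * n), V *m diag_mx gam *m W = M.
Proof.
move=> det_nz M; have B_unit : coef_mx W V \in unitmx by rewrite unitmxE unitfE.
exists (mxvec M *m invmx (coef_mx W V)); apply: (can_inj mxvecK).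
by rewrite mxvec_diag_factor -mulmxA mulVmx // mulmx1.
Qed.

Section det_affine.
Context {R : comPzRingType} {I : finType} (n : nat) (M : (I -> R) -> 'M[R]_n)
  (e : I) (r : 'I_n).
Hypotheses (entry_ma : forall i k, multiaffine (fun x => M x i k))
  (other_rows : forall x t i k, i != r -> M (upd x e t) i k = M x i k).

Lemma cofactor_upd x t k : cofactor (M (upd x e t)) r k = cofactor (M x) r k.
Proof.
rewrite /cofactor; congr (_ * \det _); apply/matrixP => i j; rewrite !mxE.
by apply: other_rows; rewrite eq_sym neq_lift.
Qed.

(* Expanding along row r, det (M x) is affine in x_e. *)
Lemma det_affine x : \det (M x) = \det (M (upd x e 0)) +
  x e * (\det (M (upd x e 1)) - \det (M (upd x e 0))).
Proof.
rewrite !(expand_det_row _ r) -sumrB mulr_sumr -big_split /=.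
apply: eq_bigr => k _; rewrite !cofactor_upd {1}(entry_ma r k e x); ring.
Qed.

End det_affine.

Section det_coef.
Context {R : comPzRingType} (d : nat).

Definition W_of (x : entry_idx d -> R) : 'M[R]_(d ^ 2, d) := \matrix_(j, k) x (inl (j, k)).
Definition V_of (x : entry_idx d -> R) : 'M[R]_(d, d ^ 2) := \matrix_(i, j) x (inr (i, j)).

Definition det_coef (x : entry_idx d -> R) : R := \det (coef_mx (W_of x) (V_of x)).

(* Each entry of coef_mx is a product V_ij W_jk of two distinct coordinates,
   and each coordinate enters a single row j, so [det_affine] applies. *)
Lemma det_coef_multiaffine : multiaffine det_coef.
Proof.
pose row_of (e : entry_idx d) : 'I_(d ^ 2) :=
  match e with inl (j, _) => j | inr (_, j) => j end.
move=> e x; apply: (@det_affine _ _ _ (fun x => coef_mx (W_of x) (V_of x)) e (row_of e)).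
- move=> j c; case/mxvec_indexP: c => i k.
  rewrite (_ : (fun x => _) = (fun x => x (inr (i, j)) * x (inl (j, k)))).
    exact: multiaffine_mul.
  by apply/funext => y; rewrite coef_mxE !mxE.
- move=> y t j c j_ne; case/mxvec_indexP: c => i k; rewrite !coef_mxE !mxE.
  case: e j_ne => [[j' k']|[i' j']] /= j_ne; rewrite !upd_neq //.
  + by apply/eqP => -[jj _]; rewrite jj eqxx in j_ne.
  + by apply/eqP => -[_ jj]; rewrite jj eqxx in j_ne.
Qed.

End det_coef.
Arguments W_of {R d}. Arguments V_of {R d}. Arguments det_coef {R d}.

Lemma mxvec_index_inj {m n} {i i' : 'I_m} {k k' : 'I_n} :
  mxvec_index i k = mxvec_index i' k' -> i = i' /\ k = k'.
Proof. by rewrite /mxvec_index => /cast_ord_inj /enum_rank_inj [-> ->]. Qed.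

(* det_coef is not identically zero: for W_{jk} = [j = (i,k) for some i] and
   V_{ij} = [j = (i,k) for some k], coef_mx W V is the identity. *)
Lemma det_coef_nonzero {R : comNzRingType} d : exists x : entry_idx d -> R, det_coef x != 0.
Proof.
exists (fun e => match e with
  | inl (j, k) => ([exists i : 'I_d, j == mxvec_index i k] : nat)%:R
  | inr (i, j) => ([exists k : 'I_d, j == mxvec_index i k] : nat)%:R
  end).
rewrite /det_coef (_ : coef_mx _ _ = 1%:M) ?det1 ?oner_neq0 //.
apply/matrixP => j c; case/mxvec_indexP: c => i k; rewrite coef_mxE !mxE /=.
have [->|ne] := eqVneq j (mxvec_index i k).
  have ex_k : [exists k', mxvec_index i k == mxvec_index i k'] by apply/existsP; exists k.
  have ex_i : [exists i', mxvec_index i k == mxvec_index i' k] by apply/existsP; exists i.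
  by rewrite ex_k ex_i mulr1.
case: (boolP [exists k', j == mxvec_index i k']) => [/existsP [k' /eqP jk']|]; last by rewrite mul0r.
case: (boolP [exists i', j == mxvec_index i' k]) => [/existsP [i' /eqP ji']|]; last by rewrite mulr0.
have [_ kk] := mxvec_index_inj (etrans (esym ji') jk').
by move: ne; rewrite jk' kk eqxx.
Qed.

Section network.
Context {R : realType} {d : nat}.

Lemma unit_ball_coord (x : 'cV[R]_d) : in_unit_ball x -> forall k, `|x k 0| <= 1.
Proof.
move=> hx k; have xk2 : x k 0 ^+ 2 <= 1.
  apply: le_trans hx; rewrite (bigD1 k) //= lerDl.
  by apply: sumr_ge0 => i _; exact: sqr_ge0.
by rewrite -(expr_le1 (n:=2)) // real_normK // num_real.
Qed.

(* A first-layer bias dominating |gam_j ((W x)_j - mu_j)| on the unit ball. *)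
Definition safe_bias (W : 'M[R]_(d ^ 2, d)) (mu : 'cV[R]_(d ^ 2)) (gam : 'rV[R]_(d ^ 2)) :
  'cV[R]_(d ^ 2) := \col_j (`|gam 0 j| * (\sum_k `|W j k| + `|mu j 0|)).

Lemma first_layer_affine W mu s gam x : s != 0 -> in_unit_ball x ->
  relu_mx (diag_mx (s *: gam) *m (s^-1 *: (W *m x - mu)) + safe_bias W mu gam) =
  diag_mx gam *m (W *m x - mu) + safe_bias W mu gam.
Proof.
move=> hs hx; apply/matrixP => j z; rewrite (ord1 z) !mul_diag_mx !mxE.
rewrite [s * _]mulrC -mulrA mulVKf //; set y := (W *m x) j 0 - mu j 0.
have bound : `|gam 0 j * y| <= `|gam 0 j| * (\sum_k `|W j k| + `|mu j 0|).
  rewrite normrM ler_wpM2l //; apply: le_trans (ler_normB _ _) _; rewrite lerD2r.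
  rewrite mxE; apply: le_trans (ler_norm_sum _ _ _) _; apply: ler_sum => k _.
  by rewrite normrM -[X in _ <= X]mulr1 ler_wpM2l // unit_ball_coord.
rewrite /relu; apply/max_idPl; move: bound; rewrite ler_norml => /andP [low _].
by rewrite -lerBlDr sub0r; move: low; rewrite /y mxE.
Qed.

Lemma bn_net_realizes (gs : 'rV[R]_d) (Ws : 'M[R]_d) (bs : 'cV[R]_d)
    (mu : 'cV[R]_(d ^ 2)) (mu' : 'cV[R]_d) (s s' : R)
    (W : 'M[R]_(d ^ 2, d)) (V : 'M[R]_(d, d ^ 2)) (gam : 'rV[R]_(d ^ 2)) :
  s != 0 -> s' != 0 -> V *m diag_mx gam *m W = diag_mx gs *m Ws ->
  exists g b g' b', forall x, in_unit_ball x ->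
    bn_net W V mu mu' s s' g b g' b' x = relu_layer gs Ws bs x.
Proof.
move=> hs hs' hgam; set b := safe_bias W mu gam.
exists (s *: gam), b, (const_mx s'), (bs + V *m (diag_mx gam *m mu) - V *m b + mu').
move=> x hx; rewrite /bn_net /relu_layer first_layer_affine //; congr relu_mx.
rewrite diag_const_mx mul_scalar_mx scalerA mulfV // scale1r.
rewrite mulmxDr !mulmxBr !mulmxA hgam.
set A := diag_mx gs *m Ws *m x; set B := V *m diag_mx gam *m mu; set C := V *m b.
by apply/matrixP => i j; rewrite !mxE; ring.
Qed.

End network.

Theorem lemma4p1 (R : realType) (d : nat)
  (gs : 'rV[R]_d) (Ws : 'M[R]_d) (bs : 'cV[R]_d)
  (mu : 'cV[R]_(d ^ 2)) (mu' : 'cV[R]_d) (s s' : R)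
  (hs : s != 0) (hs' : s' != 0)
  (law : probability R R) (hlaw : continuous_bounded_law law)
  (dT : measure_display) (T : measurableType dT) (P : probability T R)
  (W : T -> 'M[R]_(d ^ 2, d)) (V : T -> 'M[R]_(d, d ^ 2))
  (hmeas : forall j, measurable_fun setT (entry_of W V j))
  (hdist : forall j (B : set R), measurable B ->
     P (entry_of W V j @^-1` B) = law B)
  (hind : mutually_independent P (entry_of W V)) :
  {ae P, forall w : T,
    exists (g : 'rV[R]_(d ^ 2)) (b : 'cV[R]_(d ^ 2)) (g' : 'rV[R]_d) (b' : 'cV[R]_d),
      forall x : 'cV[R]_d, in_unit_ball x ->
        bn_net (W w) (V w) mu mu' s s' g b g' b' x = relu_layer gs Ws bs x}.
Proof.
have det_null := multiaffine_zero_null hmeas hdist hlaw.1 hind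
  (det_coef_multiaffine d) (depends_on_setT _) (det_coef_nonzero d).
apply: (negligibleS _ det_null) => w /= not_realizable.
apply/eqP; case: eqVneq => // det_nz; exfalso; apply: not_realizable.
have WE : W_of (values (entry_of W V) w) = W w by apply/matrixP => i j; rewrite mxE.
have VE : V_of (values (entry_of W V) w) = V w by apply/matrixP => i j; rewrite mxE.
rewrite /det_coef WE VE in det_nz.
have [gam hgam] := diag_factor_solvable det_nz (diag_mx gs *m Ws).
exact: bn_net_realizes hs hs' hgam.
Qed.
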